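(* Assume $p\ge2$, $q\ge2$, $p+q$ even, $m\in\mathbb N$ and $m+3\le\frac{p+q}2$. Let $\hat\Xi=\pi(\gamma_2(\Xi))$. Then for every $K$-homogeneous $f\in M^{+}(m)$ or $f\in M^{-}(m)$ with $K$-type $(\kappa_+,\kappa_-)$ one has $\hat\Xi f=\lambda f$ with $$\lambda=(\kappa_+-\kappa_-)(\kappa_++\kappa_--2)-\frac{p-q}{p+q}\,m(m+2).$$ In particular $\lambda=0$ if $m=0$.
   Context: Let $n=p+q$, $I_{p,q}=\mathrm{diag}(1_p,-1_q)$, $\mathfrak g=\{X\in\mathfrak{gl}_n(\mathbb C):{}^tXI_{p,q}+I_{p,q}X=0\}$, $\mathfrak o_n=\{X:{}^tX+X=0\}$, $[p]=\{1,\dots,p\}$, $p+[q]=\{p+1,\dots,n\}$, $\epsilon_i=1$ for $i\in[p]$ and $-1$ otherwise, $X_{i,j}=\epsilon_jE_{i,j}-\epsilon_iE_{j,i}$, $M_{i,j}=E_{i,j}-E_{j,i}$. $\Phi:\mathfrak g\to\mathfrak o_n$, $X\mapsto I_{p,q}^{1/2}XI_{p,q}^{-1/2}$ with $I_{p,q}^{1/2}=\mathrm{diag}(1,\dots,1,\sqrt{-1},\dots,\sqrt{-1})$, extended to tensors. $S^2$ is identified with symmetric 2-tensors and $\gamma_2:S^2(\mathfrak g)\to U(\mathfrak g)$ is the restriction of $a\otimes b\mapsto ab$. With $Q^\natural=\sum_{i,k}M_{i,k}\otimes M_{k,i}$ and $S^\natural_{ij}=\frac12\sum_k(M_{i,k}\otimes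 M_{k,j}+M_{k,j}\otimes M_{i,k})-\frac1n\delta_{ij}Q^\natural$, set $\Xi=\Phi^{-1}\big(\frac12(\sum_{i\in[p]}S^\natural_{ii}-\sum_{i\in p+[q]}S^\natural_{ii})\big)$. $K=\mathrm O(p)\times\mathrm O(q)$. On $V=\mathbb R^{p+q}$ with coordinates $(x_1,\dots,x_p,y_1,\dots,y_q)$ let $\mathcal H^k(\mathbb R^p)$, $\mathcal H^l(\mathbb R^q)$ be homogeneous harmonic polynomials of degrees $k,l$, $r_x^2=\sum x_i^2$, $r_y^2=\sum y_j^2$, and $\mathcal E=\bigoplus_{k,l\ge0}\mathcal H^k(\mathbb R^p)\otimes\mathcal H^l(\mathbb R^q)\otimes\mathbb C[[r_x^2,r_y^2]]$. The representation $\pi$ of $U(\mathfrak g)$ on $\mathcal E$ is given (with $i'=i-p$) by $\pi(X_{i,j})=x_i\partial_{x_j}-x_j\partial_{x_i}$ ($i,j\in[p]$), $-y_{i'}\partial_{y_{j'}}+y_{j'}\partial_{y_{i'}}$ ($i,j\in p+[q]$), $-\sqrt{-1}(x_iy_{j'}+\partial_{x_i}\partial_{y_{j'}})$ ($i\in[p],j\in p+[q]$), $\sqrt{-1}(x_jy_{i'}+\partial_{x_j}\partial_{y_{i'}})$ ($i\in p+[q],j\in[p]$). With $E_x=\sum x_i\partial_{x_i}$, $E_y=\sum y_j\partial_{y_j}$, $\Delta_x=\sum\partial_{x_i}^2$, $\Delta_y=\sum\partial_{y_j}^2$: $H=-E_x-\frac p2+E_y+\frac q2$, $X^+=-\frac12(\Delta_x+r_y^2)$,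 $X^-=\frac12(r_x^2+\Delta_y)$, $M^+(m)=\{f\in\mathcal E:Hf=mf,X^+f=0,(X^-)^{m+1}f=0\}$, $M^-(m)=\{f\in\mathcal E:Hf=-mf,X^-f=0,(X^+)^{m+1}f=0\}$. An element $h_1(x)h_2(y)\phi(r_x^2,r_y^2)$ with $h_1\in\mathcal H^k(\mathbb R^p)$, $h_2\in\mathcal H^l(\mathbb R^q)$ has $K$-type $(k+\frac p2,l+\frac q2)$; an element is $K$-homogeneous with $K$-type $(\kappa_+,\kappa_-)$ if it is a linear combination of such elements all of $K$-type $(\kappa_+,\kappa_-)$. *)

From HB Require Import structures.
From mathcomp Require Import all_boot all_order all_algebra.
Import Order.TTheory GRing.Theory Num.Theory.
Local Open Scope ring_scope.

Section Defs.
Variable C : numClosedFieldType.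
Variables p q : nat.
Local Notation n := (p + q)%N.

(* multi-indices (exponent vectors) and formal power series C[[x,y]];
   variable i < p is x_{i+1}, variable p + j is y_{j+1}. *)
Definition mono := 'I_n -> nat.
Definition ps := mono -> C.

Definition ps0 : ps := fun _ => 0.
Definition ps1 : ps := fun m => if [forall i, m i == 0%N] then 1 else 0.
Definition psscale (c : C) (f : ps) : ps := fun m => c * f m.

Definition mulx (i : 'I_n) (f : ps) : ps := fun m =>
  if (0 < m i)%N then f (fun j => if j == i then (m j).-1 else m j) else 0.
Definition dx (i : 'I_n) (f : ps) : ps := fun m =>
  (m i).+1%:R * f (fun j => if j == i then (m j).+1 else m j).

(* Cauchy product of formal power series (finite sum over k <= m) *)
Definition psmul (f g : ps) : ps := fun m =>
  \sum_(k : {ffun 'I_n -> 'I_((\sum_(i < n) m i)%N).+1} | [forall i, (k i <= m i)%N])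
     f (fun i => nat_of_ord (k i)) * g (fun i => (m i - k i)%N).

Definition eps (i : 'I_n) : C := if (i < p)%N then 1 else -1.

Definition rx2 : ps := fun m => \sum_(i < n | (i < p)%N) mulx i (mulx i ps1) m.
Definition ry2 : ps := fun m => \sum_(i < n | (p <= i)%N) mulx i (mulx i ps1) m.
Definition Ex (f : ps) : ps := fun m => \sum_(i < n | (i < p)%N) mulx i (dx i f) m.
Definition Ey (f : ps) : ps := fun m => \sum_(i < n | (p <= i)%N) mulx i (dx i f) m.
Definition Lapx (f : ps) : ps := fun m => \sum_(i < n | (i < p)%N) dx i (dx i f) m.
Definition Lapy (f : ps) : ps := fun m => \sum_(i < n | (p <= i)%N) dx i (dx i f) m.

Definition Hop (f : ps) : ps := fun m =>
  - Ex f m - (p%:R / 2) * f m + Ey f m + (q%:R / 2) * f m.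
Definition Xplus (f : ps) : ps := fun m => - (1 / 2) * (Lapx f m + psmul ry2 f m).
Definition Xminus (f : ps) : ps := fun m => (1 / 2) * (psmul rx2 f m + Lapy f m).

Definition harm_x (k : nat) (h : ps) : Prop :=
  (forall m : mono, h m != 0 ->
     (forall i : 'I_n, (p <= i)%N -> m i = 0%N) /\ (\sum_(i < n) m i)%N = k)
  /\ Lapx h = ps0.
Definition harm_y (l : nat) (h : ps) : Prop :=
  (forall m : mono, h m != 0 ->
     (forall i : 'I_n, (i < p)%N -> m i = 0%N) /\ (\sum_(i < n) m i)%N = l)
  /\ Lapy h = ps0.

(* phi(r_x^2, r_y^2) for phi in C[[s,t]] (coefficients phi a b);
   only a, b <= |m| can contribute to the coefficient of x^m *)
Definition rser (phi : nat -> nat -> C) : ps := fun m =>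
  \sum_(a < (\sum_(i < n) m i)%N.+1) \sum_(b < (\sum_(i < n) m i)%N.+1)
     phi a b * psmul (iter a (psmul rx2) ps1) (iter b (psmul ry2) ps1) m.

(* h1(x) h2(y) phi(r_x^2, r_y^2), of K-type (k + p/2, l + q/2) *)
Definition Kelt (k l : nat) (f : ps) : Prop :=
  exists h1 h2 phi, harm_x k h1 /\ harm_y l h2 /\ f = psmul h1 (psmul h2 (rser phi)).

Definition inE (f : ps) : Prop :=
  exists (N : nat) (c : 'I_N -> C) (k l : 'I_N -> nat) (F : 'I_N -> ps),
    (forall t, Kelt (k t) (l t) (F t)) /\ f = (fun m => \sum_(t < N) c t * F t m).

Definition Khom (kp km : C) (f : ps) : Prop :=
  exists (N : nat) (c : 'I_N -> C) (F : 'I_N -> ps) (k l : nat),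
    kp = k%:R + p%:R / 2 /\ km = l%:R + q%:R / 2 /\
    (forall t, Kelt k l (F t)) /\ f = (fun m => \sum_(t < N) c t * F t m).

Definition Mplus (mm : nat) (f : ps) : Prop :=
  inE f /\ Hop f = psscale mm%:R f /\ Xplus f = ps0 /\ iter mm.+1 Xminus f = ps0.
Definition Mminus (mm : nat) (f : ps) : Prop :=
  inE f /\ Hop f = psscale (- mm%:R) f /\ Xminus f = ps0 /\ iter mm.+1 Xplus f = ps0.

Definition piX (i j : 'I_n) (f : ps) : ps :=
  if (i < p)%N && (j < p)%N then fun m => mulx i (dx j f) m - mulx j (dx i f) m
  else if (p <= i)%N && (p <= j)%N then fun m => - mulx i (dx j f) m + mulx j (dx i f) m
  else if (i < p)%N then fun m => - 'i * (mulx i (mulx j f) m + dx i (dx j f) m)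
  else fun m => 'i * (mulx j (mulx i f) m + dx j (dx i f) m).

(* pi on g, by linearity: X = sum_{i<j} eps_j X_{ij} X_{i,j} for X in g *)
Definition piM (X : 'M[C]_n) (f : ps) : ps := fun m =>
  \sum_(i < n) \sum_(j < n | (i < j)%N) eps j * X i j * piX i j f m.

(* Phi^{-1}(M) = I_{p,q}^{-1/2} M I_{p,q}^{1/2} *)
Definition dd (i : 'I_n) : C := if (i < p)%N then 1 else 'i.
Definition phiinv (M : 'M[C]_n) : 'M[C]_n := \matrix_(i, j) ((dd i)^-1 * M i j * dd j).
Definition Mmx (a b : 'I_n) : 'M[C]_n := delta_mx a b - delta_mx b a.
Definition PM (a b : 'I_n) : ps -> ps := piM (phiinv (Mmx a b)).

Definition Xihat (f : ps) : ps := fun m =>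
  (1 / 2) * \sum_(i < n) eps i *
    ((1 / 2) * \sum_(k < n) (PM i k (PM k i f) m + PM k i (PM i k f) m)
     - n%:R^-1 * \sum_(a < n) \sum_(b < n) PM a b (PM b a f) m).

End Defs.

(* Under pi, Phi^-1(M_ab) acts by the rotation L_ab = x_a d_b - x_b d_a when a and b lie
   on the same side of p, and by -+(x_a x_b + d_a d_b) otherwise.  Writing Omega_x, Omega_y
   for the sums of the L_ab^2 over a, b <= p and over a, b > p, and Omega for the sum of all
   squares pi(Phi^-1 M_ab)^2, this gives Xihat = ((p-q)/n Omega - (Omega_x - Omega_y)) / 2.
   On h1(x) h2(y) phi(r_x^2, r_y^2) the L_ab of one side are derivations killing the radial
   factor and the harmonic factor of the other side, so Omega_x and Omega_y act by the
   spherical eigenvalues -2k(k+p-2) and -2l(l+q-2).  In terms of the sl2-triple (H, X+, X-)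
   one computes Omega = -8 X- X+ - 2H(H+2) + n(n-4)/2 = -8 X+ X- - 2H(H-2) + n(n-4)/2, so
   Omega is the scalar n(n-4)/2 - 2m(m+2) on M+(m) and on M-(m).  For m = 0, f is killed
   by H, X+ and X-, which also forces Omega_x - Omega_y = (p-q)(n-4)/2, hence Xihat f = 0. *)

From HB Require Import structures.
From mathcomp Require Import all_boot all_order all_algebra.
From mathcomp Require Import boolp ring.
Import Order.TTheory GRing.Theory Num.Theory.
Local Open Scope ring_scope.
Set Implicit Arguments. Unset Strict Implicit. Unset Printing Implicit Defensive.

Section SeriesZmod.
Variables (C : numClosedFieldType) (p q : nat).
Local Notation ps := (ps C p q).

Definition ps_add (f g : ps) : ps := fun m => f m + g m.
Definition ps_opp (f : ps) : ps := fun m => - f m.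

Lemma ps_addA : associative ps_add.
Proof. by move=> f g h; apply/funext => m; rewrite /ps_add addrA. Qed.
Lemma ps_addC : commutative ps_add.
Proof. by move=> f g; apply/funext => m; rewrite /ps_add addrC. Qed.
Lemma ps_add0 : left_id (ps0 C p q) ps_add.
Proof. by move=> f; apply/funext => m; rewrite /ps_add /ps0 add0r. Qed.
Lemma ps_addN : left_inverse (ps0 C p q) ps_opp ps_add.
Proof. by move=> f; apply/funext => m; rewrite /ps_add /ps_opp /ps0 addNr. Qed.

End SeriesZmod.

HB.instance Definition _ (C : numClosedFieldType) p q := gen_eqMixin (ps C p q).
HB.instance Definition _ (C : numClosedFieldType) p q := gen_choiceMixin (ps C p q).
HB.instance Definition _ (C : numClosedFieldType) p q :=
  GRing.isZmodule.Build (ps C p q)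
    (@ps_addA C p q) (@ps_addC C p q) (@ps_add0 C p q) (@ps_addN C p q).

Section SeriesLmod.
Variables (C : numClosedFieldType) (p q : nat).
Local Notation ps := (ps C p q).
Local Notation psscale := (psscale C p q).

Lemma psscaleA a b (f : ps) : psscale a (psscale b f) = psscale (a * b) f.
Proof. by apply/funext => m; rewrite /psscale mulrA. Qed.
Lemma psscale1 : left_id 1 psscale.
Proof. by move=> f; apply/funext => m; rewrite /psscale mul1r. Qed.
Lemma psscaleDr : right_distributive psscale +%R.
Proof. by move=> a f g; apply/funext => m; rewrite /psscale /= /ps_add mulrDr. Qed.
Lemma psscaleDl (f : ps) : {morph psscale ^~ f : a b / a + b}.
Proof. by move=> a b; apply/funext => m; rewrite /psscale /= /ps_add mulrDl. Qed.

End SeriesLmod.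

HB.instance Definition _ (C : numClosedFieldType) p q :=
  GRing.Zmodule_isLmodule.Build C (ps C p q)
    (@psscaleA C p q) (@psscale1 C p q) (@psscaleDr C p q) (@psscaleDl C p q).

Section Weyl.
Variables (C : numClosedFieldType) (p q : nat).
Local Notation n := (p + q)%N.
Local Notation ps := (ps C p q).
Local Notation mono := (mono p q).
Local Notation mulx := (mulx C p q).
Local Notation dx := (dx C p q).

Lemma psext (f g : ps) : f =1 g -> f = g. Proof. exact: funext. Qed.
Lemma monoext (m1 m2 : mono) : m1 =1 m2 -> m1 = m2. Proof. exact: funext. Qed.

Lemma psaddE (f g : ps) m : (f + g) m = f m + g m. Proof. by []. Qed.
Lemma psoppE (f : ps) m : (- f) m = - f m. Proof. by []. Qed.
Lemma pssubE (f g : ps) m : (f - g) m = f m - g m. Proof. by []. Qed.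
Lemma psscaleE c (f : ps) m : (c *: f) m = c * f m. Proof. by []. Qed.
Lemma ps0E m : (0 : ps) m = 0. Proof. by []. Qed.
Lemma pssumE (I : Type) (r : seq I) (P : pred I) (F : I -> ps) m :
  (\sum_(i <- r | P i) F i) m = \sum_(i <- r | P i) F i m.
Proof.
elim: r => [|a r IH]; first by rewrite !big_nil.
by rewrite !big_cons; case: (P a); rewrite ?psaddE IH.
Qed.

Definition incm (i : 'I_n) (m : mono) : mono :=
  fun j => if j == i then (m j).+1 else m j.
Definition decm (i : 'I_n) (m : mono) : mono :=
  fun j => if j == i then (m j).-1 else m j.

Lemma incm_id i m : incm i m i = (m i).+1. Proof. by rewrite /incm eqxx. Qed.
Lemma decm_id i m : decm i m i = (m i).-1. Proof. by rewrite /decm eqxx. Qed.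
Lemma incm_ne i j m : j != i -> incm i m j = m j.
Proof. by rewrite /incm => /negPf ->. Qed.
Lemma decm_ne i j m : j != i -> decm i m j = m j.
Proof. by rewrite /decm => /negPf ->. Qed.
Lemma incmK i : cancel (incm i) (decm i).
Proof. by move=> m; apply: monoext => j; rewrite /decm /incm; case: eqP. Qed.
Lemma decmK i m : (0 < m i)%N -> incm i (decm i m) = m.
Proof.
by move=> mi; apply: monoext => j; rewrite /decm /incm; case: eqP => // ->; rewrite prednK.
Qed.
Lemma incmC i j m : incm i (incm j m) = incm j (incm i m).
Proof. by apply: monoext => k; rewrite /incm; do 2 case: eqP. Qed.
Lemma decmC i j m : decm i (decm j m) = decm j (decm i m).
Proof. by apply: monoext => k; rewrite /decm; do 2 case: eqP. Qed.
Lemma incm_decmC i j m : i != j -> incm i (decm j m) = decm j (incm i m).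
Proof.
move=> ij; apply: monoext => k; rewrite /decm /incm.
by case: (eqVneq k i) => [->|]; [rewrite (negPf ij) | case: eqP].
Qed.

Lemma mulxE i f m : mulx i f m = if (0 < m i)%N then f (decm i m) else 0.
Proof. by []. Qed.
Lemma dxE i f m : dx i f m = (m i).+1%:R * f (incm i m).
Proof. by []. Qed.

Lemma mulx_is_linear i : linear (mulx i).
Proof.
move=> a f g; apply: psext => m; rewrite psaddE psscaleE !mulxE.
by case: ifP; rewrite ?mulr0 ?addr0.
Qed.
HB.instance Definition _ i :=
  GRing.isLinear.Build C ps ps _ (mulx i) (mulx_is_linear i).

Lemma dx_is_linear i : linear (dx i).
Proof.
by move=> a f g; apply: psext => m; rewrite psaddE psscaleE !dxE mulrDr mulrCA.
Qed.
HB.instance Definition _ i :=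
  GRing.isLinear.Build C ps ps _ (dx i) (dx_is_linear i).

(* Stated for the bare operators: rewriting with linearD and the like would leave
   the linear-structure projection in the term, hiding it from later rewrites. *)
Lemma mulx0 i : mulx i 0 = 0. Proof. exact: linear0. Qed.
Lemma mulxD i : {morph mulx i : f g / f + g}. Proof. exact: linearD. Qed.
Lemma mulxB i : {morph mulx i : f g / f - g}. Proof. exact: linearB. Qed.
Lemma mulxN i : {morph mulx i : f / - f}. Proof. exact: linearN. Qed.
Lemma mulxZ i c : {morph mulx i : f / c *: f}. Proof. exact: linearZ. Qed.
Lemma mulx_sum i (I : Type) (r : seq I) (P : pred I) (F : I -> ps) :
  mulx i (\sum_(k <- r | P k) F k) = \sum_(k <- r | P k) mulx i (F k).
Proof. exact: linear_sum. Qed.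
Lemma dxD i : {morph dx i : f g / f + g}. Proof. exact: linearD. Qed.
Lemma dxB i : {morph dx i : f g / f - g}. Proof. exact: linearB. Qed.
Lemma dxN i : {morph dx i : f / - f}. Proof. exact: linearN. Qed.
Lemma dxZ i c : {morph dx i : f / c *: f}. Proof. exact: linearZ. Qed.
Lemma dx_sum i (I : Type) (r : seq I) (P : pred I) (F : I -> ps) :
  dx i (\sum_(k <- r | P k) F k) = \sum_(k <- r | P k) dx i (F k).
Proof. exact: linear_sum. Qed.

Lemma dx_mulx i j f : dx i (mulx j f) = mulx j (dx i f) + (i == j)%:R *: f.
Proof.
apply: psext => m; rewrite psaddE psscaleE !dxE !mulxE.
case: (eqVneq i j) => [<-|ij].
  rewrite incm_id /= incmK mul1r; case: (posnP (m i)) => [->|mi].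
    by rewrite add0r mulr1n mul1r.
  by rewrite dxE decm_id decmK // prednK // mulrSr mulrDl mul1r.
rewrite incm_ne 1?eq_sym // mul0r addr0; case: ifP => _; last by rewrite mulr0.
by rewrite dxE decm_ne // incm_decmC.
Qed.

Lemma mulxC i j f : mulx i (mulx j f) = mulx j (mulx i f).
Proof.
case: (eqVneq i j) => [->//|ij].
apply: psext => m; rewrite !mulxE decm_ne 1?eq_sym // decm_ne //.
by do 2 case: ifP => //; rewrite decmC.
Qed.

Lemma dxC i j f : dx i (dx j f) = dx j (dx i f).
Proof.
case: (eqVneq i j) => [->//|ij].
by apply: psext => m; rewrite !dxE incm_ne 1?eq_sym // incm_ne // incmC mulrCA.
Qed.

Lemma mulx_dx i f : mulx i (dx i f) = fun m => (m i)%:R * f m.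
Proof.
apply: psext => m; rewrite mulxE; case: (posnP (m i)) => [->|mi]; first by rewrite mul0r.
by rewrite dxE decm_id prednK // decmK.
Qed.

End Weyl.

Ltac psring :=
  apply: psext => ?; rewrite ?(psaddE, psoppE, pssubE, psscaleE, ps0E, pssumE) /=; ring.

Section QuadraticOperators.
Variables (C : numClosedFieldType) (p q : nat).
Local Notation n := (p + q)%N.
Local Notation ps := (ps C p q).
Local Notation mono := (mono p q).
Local Notation mulx := (mulx C p q).
Local Notation dx := (dx C p q).
Implicit Types (P Q : pred 'I_n) (g : ps).

Definition sqnorm P g : ps := \sum_(i | P i) mulx i (mulx i g).
Definition lap P g : ps := \sum_(i | P i) dx i (dx i g).
Definition degm P (m : mono) : nat := (\sum_(i | P i) m i)%N.
Definition euler P g : ps := fun m => (degm P m)%:R * g m.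

Lemma sqnorm_is_linear P : linear (sqnorm P).
Proof.
move=> c f g; rewrite /sqnorm scaler_sumr -big_split /=.
by apply: eq_bigr => i _; rewrite !linearP.
Qed.
HB.instance Definition _ P :=
  GRing.isLinear.Build C ps ps _ (sqnorm P) (sqnorm_is_linear P).

Lemma lap_is_linear P : linear (lap P).
Proof.
move=> c f g; rewrite /lap scaler_sumr -big_split /=.
by apply: eq_bigr => i _; rewrite !linearP.
Qed.
HB.instance Definition _ P :=
  GRing.isLinear.Build C ps ps _ (lap P) (lap_is_linear P).

Lemma eulerE P g m : euler P g m = (degm P m)%:R * g m. Proof. by []. Qed.

Lemma sum_mulx_dx P g : \sum_(i | P i) mulx i (dx i g) = euler P g.
Proof.
apply: psext => m; rewrite pssumE eulerE /degm natr_sum mulr_suml.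
by apply: eq_bigr => i _; rewrite mulx_dx.
Qed.

Lemma sum_delta P a (X : 'I_n -> ps) :
  \sum_(b | P b) (a == b)%:R *: X b = (P a)%:R *: X a.
Proof.
case: (boolP (P a)) => Pa; last first.
  rewrite scale0r big1 // => b Pb; case: eqP => [ab|_]; last by rewrite scale0r.
  by move: Pa; rewrite ab Pb.
rewrite (bigD1 a) //= eqxx big1 ?addr0 // => b /andP[_ ba].
by rewrite eq_sym (negPf ba) scale0r.
Qed.

Lemma dx2_mulx2 i j g : dx i (dx i (mulx j (mulx j g))) =
  mulx j (mulx j (dx i (dx i g))) + (i == j)%:R *: (4%:R *: mulx i (dx i g) + 2%:R *: g).
Proof.
case: (eqVneq i j) => [<-|/negPf ij];
  by rewrite !(dx_mulx, dxD, dxZ, mulxD, mulxZ) /= ?eqxx ?ij; psring.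
Qed.

Lemma lap_sqnorm P g :
  lap P (sqnorm P g) = sqnorm P (lap P g) + 4%:R *: euler P g + (2 * #|P|)%:R *: g.
Proof.
rewrite /lap /sqnorm.
under eq_bigr => i _ do
  rewrite !(dx_sum, mulx_sum) (eq_bigr _ (fun j _ => dx2_mulx2 i j g)) big_split.
rewrite big_split /= exchange_big -addrA; congr (_ + _).
  by apply: eq_bigr => j _; rewrite !mulx_sum.
under eq_bigr => i Pi do rewrite (sum_delta P i (fun=> _)) Pi scale1r.
rewrite big_split /= -scaler_sumr sum_mulx_dx.
by rewrite sumr_const natrM -scaler_nat scalerA mulr_natl mulr_natr.
Qed.

Lemma lapC P Q g : lap P (lap Q g) = lap Q (lap P g).
Proof.
rewrite /lap; under eq_bigr => i _ do rewrite !dx_sum.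
rewrite exchange_big /=; apply: eq_bigr => j _; rewrite !dx_sum.
by apply: eq_bigr => i _; rewrite !(dxC i j).
Qed.

Lemma sqnormC P Q g : sqnorm P (sqnorm Q g) = sqnorm Q (sqnorm P g).
Proof.
rewrite /sqnorm; under eq_bigr => i _ do rewrite !mulx_sum.
rewrite exchange_big /=; apply: eq_bigr => j _; rewrite !mulx_sum.
by apply: eq_bigr => i _; rewrite !(mulxC i j).
Qed.

Lemma mulx2_dx2 a b g : mulx a (mulx b (dx a (dx b g))) =
  fun m => (m a)%:R * ((m b)%:R - (a == b)%:R) * g m.
Proof.
rewrite (dxC a b) mulx_dx; apply: psext => m; rewrite mulxE.
case: (posnP (m a)) => [->|ma]; first by rewrite !mul0r.
rewrite dxE decm_id prednK // decmK //.
case: (eqVneq b a) => [->|ba]; last by rewrite decm_ne // subr0 mulrCA mulrA.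
by rewrite decm_id /= -subn1 natrB // mulrCA mulrA.
Qed.

Lemma sum_delta_nat P a : \sum_(b | P b) (a == b)%:R = (P a)%:R :> C.
Proof.
case: (boolP (P a)) => Pa; last first.
  by rewrite big1 // => b Pb; case: eqP Pa => // ->; rewrite Pb.
by rewrite (bigD1 a) //= eqxx big1 ?addr0 // => b /andP[_]; rewrite eq_sym => /negPf ->.
Qed.

Lemma sum_mulx2_dx2 P Q g :
  \sum_(a | P a) \sum_(b | Q b) mulx a (mulx b (dx a (dx b g))) =
  euler P (euler Q g) - euler (predI P Q) g.
Proof.
apply: psext => m; rewrite pssumE pssubE !eulerE /degm !natr_sum.
transitivity (\sum_(a | P a)
  ((m a)%:R * (\sum_(b | Q b) (m b)%:R) - (m a)%:R * (Q a)%:R) * g m).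
  apply: eq_bigr => a _; rewrite pssumE -sum_delta_nat -mulrBr -sumrB mulr_sumr mulr_suml.
  by apply: eq_bigr => b _; rewrite mulx2_dx2.
rewrite -mulr_suml sumrB -mulr_suml mulrA mulrBl; congr (_ - _ * _).
by rewrite big_mkcondr /=; apply: eq_bigr => a _; case: (Q a); rewrite ?mulr1 ?mulr0.
Qed.
End QuadraticOperators.

Section RotationsBoosts.
Variables (C : numClosedFieldType) (p q : nat).
Local Notation n := (p + q)%N.
Local Notation ps := (ps C p q).
Local Notation mulx := (mulx C p q).
Local Notation dx := (dx C p q).
Implicit Types (P Q : pred 'I_n) (g : ps).

Definition rotation a b g : ps := mulx a (dx b g) - mulx b (dx a g).
Definition boost a b g : ps := mulx a (mulx b g) + dx a (dx b g).
Definition rotation_casimir P g : ps :=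
  \sum_(a | P a) \sum_(b | P b) rotation a b (rotation a b g).
Definition boost_casimir P Q g : ps :=
  \sum_(a | P a) \sum_(b | Q b) boost a b (boost a b g).

Lemma rotation_is_linear a b : linear (rotation a b).
Proof. by move=> c f g; rewrite /rotation !(dxD, dxZ, mulxD, mulxZ); psring. Qed.
HB.instance Definition _ a b :=
  GRing.isLinear.Build C ps ps _ (rotation a b) (rotation_is_linear a b).

Lemma rotationN a b : {morph rotation a b : f / - f}. Proof. exact: linearN. Qed.
Lemma rotationZ a b c : {morph rotation a b : f / c *: f}. Proof. exact: linearZ. Qed.
Lemma rotation_sum a b (I : Type) (r : seq I) (P : pred I) (F : I -> ps) :
  rotation a b (\sum_(k <- r | P k) F k) = \sum_(k <- r | P k) rotation a b (F k).
Proof. exact: linear_sum. Qed.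
Lemma rotation_antisym a b g : rotation b a g = - rotation a b g.
Proof. by rewrite /rotation opprB. Qed.

Lemma boostN a b : {morph boost a b : f / - f}.
Proof. by move=> f; rewrite /boost !(mulxN, dxN) opprD. Qed.
Lemma boostC a b g : boost a b g = boost b a g.
Proof. by rewrite /boost mulxC dxC. Qed.

Lemma rotation_rotation a b g : rotation a b (rotation a b g) =
  mulx a (mulx a (dx b (dx b g))) + mulx b (mulx b (dx a (dx a g)))
  - 2%:R *: mulx a (mulx b (dx a (dx b g)))
  + 2%:R *: ((a == b)%:R *: mulx a (dx a g)) - mulx a (dx a g) - mulx b (dx b g).
Proof.
rewrite /rotation; case: (eqVneq a b) => [<-|ab]; first by rewrite subrr; psring.
have ba : b != a by rewrite eq_sym.
rewrite !(dx_mulx, dxB, dxZ, mulxD, mulxB, mulxN, mulxZ) /= !eqxx ?(negPf ab) (negPf ba).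
by rewrite (mulxC b a) (dxC b a); psring.
Qed.

Lemma boost_boost a b g : a != b -> boost a b (boost a b g) =
  mulx a (mulx a (mulx b (mulx b g))) + dx a (dx a (dx b (dx b g)))
  + 2%:R *: mulx a (mulx b (dx a (dx b g))) + mulx a (dx a g) + mulx b (dx b g) + g.
Proof.
move=> ab; rewrite /boost.
have ba : b != a by rewrite eq_sym.
rewrite !(dx_mulx, dxD, dxZ, mulxD, mulxZ) /= !eqxx (negPf ab) (negPf ba).
by rewrite !(mulxC b a) !(dxC b a); psring.
Qed.

Lemma rotation_casimirE P g : rotation_casimir P g =
  2%:R *: (sqnorm P (lap P g) - euler P (euler P g) - (#|P|%:R - 2%:R) *: euler P g).
Proof.
have sum_sq_lap : \sum_(a | P a) \sum_(b | P b) mulx a (mulx a (dx b (dx b g))) =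
    sqnorm P (lap P g).
  by apply: eq_bigr => a _; rewrite !mulx_sum.
have sum_sq_lap' : \sum_(a | P a) \sum_(b | P b) mulx b (mulx b (dx a (dx a g))) =
    sqnorm P (lap P g).
  by rewrite exchange_big.
have sum_cross : \sum_(a | P a) \sum_(b | P b) 2%:R *: mulx a (mulx b (dx a (dx b g))) =
    2%:R *: (euler P (euler P g) - euler (predI P P) g).
  by rewrite -sum_mulx2_dx2 scaler_sumr; apply: eq_bigr => a _; rewrite scaler_sumr.
have euler_PP : euler (predI P P) g = euler P g.
  by apply: psext => m; rewrite !eulerE /degm (eq_bigl P) // => i /=; rewrite andbb.
have sum_delta_euler : \sum_(a | P a) \sum_(b | P b) 2%:R *: ((a == b)%:R *: mulx a (dx a g)) =
    2%:R *: euler P g.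
  rewrite -sum_mulx_dx scaler_sumr; apply: eq_bigr => a Pa.
  by rewrite -scaler_sumr (sum_delta P a (fun=> _)) Pa scale1r.
have sum_euler_l : \sum_(a | P a) \sum_(b | P b) mulx a (dx a g) = #|P|%:R *: euler P g.
  rewrite -sum_mulx_dx scaler_sumr; apply: eq_bigr => a _.
  by rewrite sumr_const scaler_nat.
have sum_euler_r : \sum_(a | P a) \sum_(b | P b) mulx b (dx b g) = #|P|%:R *: euler P g.
  by rewrite exchange_big.
rewrite /rotation_casimir.
under eq_bigr => a _ do
  rewrite (eq_bigr _ (fun b _ => rotation_rotation a b g)) !big_split !sumrN /=.
rewrite !big_split !sumrN /= sum_sq_lap sum_sq_lap' sum_cross euler_PP.
by rewrite sum_delta_euler sum_euler_l sum_euler_r; psring.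
Qed.

Lemma boost_casimirE P Q g : (forall i, P i -> Q i -> False) ->
  boost_casimir P Q g = sqnorm P (sqnorm Q g) + lap P (lap Q g)
    + 2%:R *: euler P (euler Q g) + #|Q|%:R *: euler P g + #|P|%:R *: euler Q g
    + (#|P| * #|Q|)%:R *: g.
Proof.
move=> PQ.
have neq a b : P a -> Q b -> a != b.
  by move=> Pa Qb; apply/eqP => ab; subst; exact: PQ Pa Qb.
have sum_sq_sq : \sum_(a | P a) \sum_(b | Q b) mulx a (mulx a (mulx b (mulx b g))) =
    sqnorm P (sqnorm Q g).
  by apply: eq_bigr => a _; rewrite !mulx_sum.
have sum_lap_lap : \sum_(a | P a) \sum_(b | Q b) dx a (dx a (dx b (dx b g))) = lap P (lap Q g).
  by apply: eq_bigr => a _; rewrite !dx_sum.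
have sum_cross : \sum_(a | P a) \sum_(b | Q b) 2%:R *: mulx a (mulx b (dx a (dx b g))) =
    2%:R *: euler P (euler Q g).
  have PQ0 : euler (predI P Q) g = 0.
    apply: psext => m; rewrite eulerE /degm big_pred0 ?mul0r // => i /=.
    by apply/negP => /andP[]; exact: PQ.
  transitivity (2%:R *: (euler P (euler Q g) - euler (predI P Q) g)).
    by rewrite -sum_mulx2_dx2 scaler_sumr; apply: eq_bigr => a _; rewrite scaler_sumr.
  by rewrite PQ0 subr0.
have sum_euler_l : \sum_(a | P a) \sum_(b | Q b) mulx a (dx a g) = #|Q|%:R *: euler P g.
  rewrite -sum_mulx_dx scaler_sumr; apply: eq_bigr => a _.
  by rewrite sumr_const scaler_nat.
have sum_euler_r : \sum_(a | P a) \sum_(b | Q b) mulx b (dx b g) = #|P|%:R *: euler Q g.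
  under eq_bigr => a _ do rewrite sum_mulx_dx.
  by rewrite sumr_const scaler_nat.
have sum_const : \sum_(a | P a) \sum_(b | Q b) g = (#|P| * #|Q|)%:R *: g.
  under eq_bigr => a _ do rewrite sumr_const.
  by rewrite sumr_const -mulrnA scaler_nat mulnC.
rewrite /boost_casimir.
under eq_bigr => a Pa do
  rewrite (eq_bigr _ (fun b Qb => boost_boost g (neq a b Pa Qb))) !big_split /=.
by rewrite !big_split /= sum_sq_sq sum_lap_lap sum_cross sum_euler_l sum_euler_r sum_const.
Qed.

End RotationsBoosts.

Section Representation.
Variables (C : numClosedFieldType) (p q : nat).
Local Notation n := (p + q)%N.
Local Notation ps := (ps C p q).
Local Notation PM := (PM C p q).
Local Notation piX := (piX C p q).
Local Notation eps := (eps C p q).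
Local Notation dd := (dd C p q).
Local Notation rotation := (@rotation C p q).
Local Notation boost := (@boost C p q).
Implicit Types (g : ps).

Definition px : pred 'I_n := fun i => (i < p)%N.
Definition py : pred 'I_n := fun i => (p <= i)%N.

Lemma pyE i : py i = ~~ px i. Proof. by rewrite /py /px -leqNgt. Qed.
Lemma px_py_disjoint i : px i -> py i -> False. Proof. by rewrite pyE => ->. Qed.

Lemma card_px : #|px| = p.
Proof.
rewrite -sum1_card (eq_bigl (fun i : 'I_n => (i < p)%N)) //.
by rewrite -(big_ord_widen n (fun _ => 1%N)) ?leq_addr // sum1_card card_ord.
Qed.

Lemma card_py : #|py| = q.
Proof.
have := cardC px; rewrite card_px card_ord => /eqP; rewrite eqn_add2l => /eqP E.
by rewrite -[RHS]E; apply: eq_card => i; rewrite !inE -pyE.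
Qed.

Lemma sum_px_py (V : zmodType) (F : 'I_n -> V) :
  \sum_(k < n) F k = \sum_(k | px k) F k + \sum_(k | py k) F k.
Proof. by rewrite (bigID px) /=; congr (_ + _); apply: eq_bigl => k; rewrite pyE. Qed.

Lemma eps_px i : px i -> eps i = 1. Proof. by rewrite /eps /px => ->. Qed.
Lemma eps_py i : py i -> eps i = -1. Proof. by rewrite /eps pyE /px => /negPf ->. Qed.
Lemma dd_px i : px i -> dd i = 1. Proof. by rewrite /dd /px => ->. Qed.
Lemma dd_py i : py i -> dd i = 'i. Proof. by rewrite /dd pyE /px => /negPf ->. Qed.

Lemma piX_px_px i j g : px i -> px j -> piX i j g = rotation i j g.
Proof. by rewrite /piX /px => -> ->. Qed.
Lemma piX_py_py i j g : py i -> py j -> piX i j g = - rotation i j g.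
Proof.
rewrite /py => pi pj; rewrite /piX pi pj ltnNge pi /=.
by apply: psext => m; rewrite psoppE /rotation pssubE opprB addrC.
Qed.
Lemma piX_px_py i j g : px i -> py j -> piX i j g = - 'i *: boost i j g.
Proof.
rewrite /px /py => pi pj; rewrite /piX pi ltnNge pj leqNgt pi /=.
exact: psext.
Qed.

Lemma PM_antisym a b g : PM b a g = - PM a b g.
Proof.
apply: psext => m; rewrite /PM /piM psoppE -sumrN; apply: eq_bigr => i _.
rewrite -sumrN; apply: eq_bigr => j _; rewrite /phiinv /Mmx !mxE; ring.
Qed.

Lemma phiinv_Mmx a b i j : phiinv C p q (Mmx C p q a b) i j =
  (dd i)^-1 * (((i == a) && (j == b))%:R - ((i == b) && (j == a))%:R) * dd j.
Proof. by rewrite /phiinv /Mmx !mxE. Qed.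

Lemma sum_lt_single (V : zmodType) (F : 'I_n -> 'I_n -> V) (a b : 'I_n) :
  (a < b)%N ->
  (forall i j : 'I_n, (i < j)%N -> (i != a) || (j != b) -> F i j = 0) ->
  \sum_(i < n) \sum_(j < n | (i < j)%N) F i j = F a b.
Proof.
move=> ab F0; rewrite (bigD1 a) //= (bigD1 b) //= !big1 ?addr0 //.
  by move=> i ia; apply: big1 => j ij; apply: F0; rewrite // ia.
by move=> j /andP[aj jb]; apply: F0; rewrite // jb orbT.
Qed.

Lemma PM_lt (a b : 'I_n) g : (a < b)%N ->
  PM a b g = if px a == px b then rotation a b g else - boost a b g.
Proof.
move=> ab; have ab' : a != b by rewrite neq_ltn ab.
apply: psext => m; rewrite /PM /piM (sum_lt_single ab); last first.
  move=> i j ij ne; rewrite phiinv_Mmx.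
  have -> : (i == a) && (j == b) = false by apply/negbTE; rewrite negb_and.
  have -> : (i == b) && (j == a) = false.
    apply/andP => -[/eqP ib /eqP ja].
    by move: ij; rewrite ib ja => /(ltn_trans ab); rewrite ltnn.
  by rewrite subrr mulr0 mul0r mulr0 mul0r.
rewrite phiinv_Mmx !eqxx (negPf ab') /= subr0 mulr1.
case: (boolP (px a)) => pa; case: (boolP (px b)) => pb; rewrite -?pyE /= in pa pb *.
- by rewrite eps_px // !dd_px // piX_px_px // invr1 !mul1r.
- rewrite eps_py // dd_px // dd_py // piX_px_py // psscaleE psoppE invr1 mul1r.
  by rewrite !(mulNr, mulrN, mulN1r, opprK) mul1r mulrA mulCii mulN1r.
- by move: (leq_ltn_trans pa (ltn_trans ab pb)); rewrite ltnn.
- rewrite eps_py // !dd_py // piX_py_py // psoppE mulVf ?neq0Ci //.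
  by rewrite mulr1 mulN1r opprK.
Qed.

Lemma PM_diag a g : PM a a g = 0.
Proof.
apply: psext => m; rewrite /PM /piM ps0E big1 // => i _; apply: big1 => j _.
by rewrite phiinv_Mmx subrr mulr0 mul0r mulr0 mul0r.
Qed.

Lemma PME a b g : PM a b g =
  if px a == px b then rotation a b g else if px a then - boost a b g else boost a b g.
Proof.
have px_lt (i j : 'I_n) : (i < j)%N -> px j -> px i by move=> ij; apply: ltn_trans.
case: (ltngtP a b) => [ab|ba|/val_inj <-]; last by rewrite PM_diag eqxx /rotation subrr.
  rewrite PM_lt //; case: (boolP (px b)) => pb; first by rewrite (px_lt _ _ ab pb) /=.
  by case: (px a) => /=.
rewrite PM_antisym PM_lt // eq_sym; case: (boolP (px a)) => pa.
  by rewrite (px_lt _ _ ba pa) /= rotation_antisym opprK.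
by case: (px b) => /=; [rewrite opprK boostC | rewrite rotation_antisym opprK].
Qed.

Lemma PMN a b (h : ps) : PM a b (- h) = - PM a b h.
Proof.
by rewrite !PME rotationN boostN; case: (px a == px b); case: (px a).
Qed.

Lemma PM_sq a b g : PM a b (PM a b g) =
  if px a == px b then rotation a b (rotation a b g) else boost a b (boost a b g).
Proof.
by rewrite !PME; case: (px a == px b); case: (px a); rewrite /= ?boostN ?opprK.
Qed.

Definition casimir g : ps :=
  rotation_casimir px g + rotation_casimir py g + 2%:R *: boost_casimir px py g.

Lemma sum_PM_sq_px i g : px i -> \sum_(k < n) PM i k (PM i k g) =
  \sum_(k | px k) rotation i k (rotation i k g) + \sum_(k | py k) boost i k (boost i k g).
Proof.
move=> pi; rewrite sum_px_py; congr (_ + _); apply: eq_bigr => k pk.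
  by rewrite PM_sq pi pk.
by rewrite pyE in pk; rewrite PM_sq pi (negPf pk).
Qed.

Lemma sum_PM_sq_py i g : py i -> \sum_(k < n) PM i k (PM i k g) =
  \sum_(k | px k) boost k i (boost k i g) + \sum_(k | py k) rotation i k (rotation i k g).
Proof.
rewrite pyE => /negPf pi; rewrite sum_px_py; congr (_ + _); apply: eq_bigr => k pk.
  by rewrite PM_sq pi pk /= !(boostC i k).
by rewrite pyE in pk; rewrite PM_sq pi (negPf pk).
Qed.

Lemma boost_casimir_exchange g :
  \sum_(i | py i) \sum_(k | px k) boost k i (boost k i g) = boost_casimir px py g.
Proof. by rewrite exchange_big. Qed.

Lemma sum_PM_sq g : \sum_(a < n) \sum_(b < n) PM a b (PM a b g) = casimir g.
Proof.
rewrite sum_px_py (eq_bigr _ (fun i => @sum_PM_sq_px i g)).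
rewrite (eq_bigr _ (fun i => @sum_PM_sq_py i g)) !big_split /=.
rewrite boost_casimir_exchange -/(rotation_casimir px g) -/(rotation_casimir py g).
by rewrite -/(boost_casimir px py g) /casimir; psring.
Qed.

Lemma sum_eps_PM_sq g : \sum_(i < n) eps i *: \sum_(k < n) PM i k (PM i k g) =
  rotation_casimir px g - rotation_casimir py g.
Proof.
rewrite sum_px_py.
rewrite (eq_bigr _ (fun i pi => congr2 _ (eps_px pi) (@sum_PM_sq_px i g pi))).
rewrite (eq_bigr _ (fun i pi => congr2 _ (eps_py pi) (@sum_PM_sq_py i g pi))).
under eq_bigr => i _ do rewrite scale1r.
under [X in _ + X]eq_bigr => i _ do rewrite scaleN1r.
rewrite sumrN !big_split /= boost_casimir_exchange -/(rotation_casimir px g).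
by rewrite -/(rotation_casimir py g) -/(boost_casimir px py g); psring.
Qed.

Lemma sum_eps : \sum_(i < n) eps i = p%:R - q%:R.
Proof.
rewrite sum_px_py (eq_bigr _ (fun i => @eps_px i)) (eq_bigr _ (fun i => @eps_py i)).
by rewrite !sumr_const card_px card_py mulNrn.
Qed.

Lemma XihatE g : (0 < n)%N -> Xihat C p q g = 2%:R^-1 *:
  ((p%:R - q%:R) / n%:R *: casimir g - (rotation_casimir px g - rotation_casimir py g)).
Proof.
move=> n_gt0; have PM_flip i k : PM i k (PM k i g) = - PM i k (PM i k g).
  by rewrite (PM_antisym i k g) PMN.
apply: psext => m; rewrite /Xihat -sum_PM_sq -sum_eps_PM_sq !psscaleE pssubE psscaleE.
rewrite !pssumE; congr (_ * _); first by rewrite mul1r.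
pose S i := \sum_(k < n) PM i k (PM i k g) m.
have half_sum_flip i :
    1 / 2 * \sum_(k < n) (PM i k (PM k i g) m + PM k i (PM i k g) m) = - S i.
  rewrite /S -sumrN mulr_sumr; apply: eq_bigr => k _.
  by rewrite PM_flip PM_antisym !psoppE; field.
have sum_flip : \sum_(a < n) \sum_(b < n) PM a b (PM b a g) m = - \sum_i S i.
  rewrite -sumrN; apply: eq_bigr => a _.
  by rewrite -sumrN; apply: eq_bigr => b _; rewrite PM_flip.
have sum_pt : \sum_i (\sum_(b < n) PM i b (PM i b g)) m = \sum_i S i.
  by apply: eq_bigr => i _; rewrite pssumE.
have signed_sum_pt : \sum_i (eps i *: \sum_(k < n) PM i k (PM i k g)) m = \sum_i eps i * S i.
  by apply: eq_bigr => i _; rewrite psscaleE pssumE.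
under eq_bigr => i _ do rewrite half_sum_flip sum_flip.
rewrite sum_pt signed_sum_pt (eq_bigr (fun i => eps i * (n%:R^-1 * \sum_a S a) - eps i * S i)).
  by rewrite sumrB -mulr_suml sum_eps; field; rewrite -natrD pnatr_eq0 -lt0n.
by move=> i _; ring.
Qed.

End Representation.

Section CauchyProduct.
Variables (C : numClosedFieldType) (p q : nat).
Local Notation n := (p + q)%N.
Local Notation ps := (ps C p q).
Local Notation mono := (mono p q).
Local Notation mulx := (mulx C p q).
Local Notation dx := (dx C p q).
Local Notation psmul := (psmul C p q).

Definition tomono B (K : {ffun 'I_n -> 'I_B.+1}) : mono := fun i => K i.
Definition ofmono B (k : mono) : {ffun 'I_n -> 'I_B.+1} := [ffun i => inord (k i)].

Lemma tomonoK B k : (forall i, k i <= B)%N -> tomono (ofmono B k) = k.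
Proof. by move=> kB; apply: monoext => i; rewrite /tomono ffunE inordK // ltnS. Qed.
Lemma ofmonoK B : cancel (@tomono B) (ofmono B).
Proof. by move=> K; apply/ffunP => i; rewrite ffunE inord_val. Qed.

Lemma reindex_mono_sum B B' (P Q : pred mono) (phi psi : mono -> mono) (F G : mono -> C) :
  (forall k, P k -> forall i, k i <= B)%N -> (forall k, Q k -> forall i, k i <= B')%N ->
  (forall k, P k -> Q (phi k) /\ psi (phi k) = k) ->
  (forall k, Q k -> P (psi k) /\ phi (psi k) = k) ->
  (forall k, P k -> F k = G (phi k)) ->
  \sum_(K : {ffun 'I_n -> 'I_B.+1} | P (tomono K)) F (tomono K) =
  \sum_(K : {ffun 'I_n -> 'I_B'.+1} | Q (tomono K)) G (tomono K).
Proof.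
move=> bP bQ PQ QP FG.
rewrite (reindex_onto (fun K' => ofmono B (psi (tomono K')))
                      (fun K => ofmono B' (phi (tomono K)))); last first.
  by move=> K PK; have [Qk ek] := PQ _ PK; rewrite tomonoK ?ek ?ofmonoK //; apply: bQ.
apply: eq_big => [K'|K /andP[PK /eqP eK]]; last first.
  have [Qk _] := PQ _ PK; rewrite -[in RHS]eK FG //.
  by rewrite [tomono (ofmono B' _)]tomonoK //; exact: bQ Qk.
apply/idP/idP => [/andP[PK /eqP <-]|QK].
  by have [Qk _] := PQ _ PK; rewrite tomonoK //; exact: bQ Qk.
have [Pk ek] := QP _ QK; rewrite tomonoK; last exact: bP.
by rewrite Pk ek ofmonoK eqxx.
Qed.

Definition mono_le (k m : mono) : bool := [forall i, k i <= m i]%N.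
Definition mono_sub (m k : mono) : mono := fun i => (m i - k i)%N.
Definition mdeg (m : mono) : nat := (\sum_(i < n) m i)%N.
Definition conv_sum (m : mono) (F : mono -> C) : C :=
  \sum_(K : {ffun 'I_n -> 'I_(mdeg m).+1} | mono_le (tomono K) m) F (tomono K).

Lemma mono_leP k m : reflect (forall i, k i <= m i)%N (mono_le k m).
Proof. exact: forallP. Qed.

Lemma mono_le_mdeg k m : mono_le k m -> forall i, (k i <= mdeg m)%N.
Proof.
move/mono_leP => km i; apply: leq_trans (km i) _.
by rewrite /mdeg (bigD1 i) //= leq_addr.
Qed.

Lemma psmulE f g m : psmul f g m = conv_sum m (fun k => f k * g (mono_sub m k)).
Proof. by []. Qed.

Lemma eq_conv_sum m F G : (forall k, mono_le k m -> F k = G k) ->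
  conv_sum m F = conv_sum m G.
Proof. by move=> FG; apply: eq_bigr => K /FG. Qed.

Lemma conv_sum_incm i m F : (forall k, k i = 0%N -> F k = 0) ->
  conv_sum (incm i m) F = conv_sum m (fun k => F (incm i k)).
Proof.
move=> F0; rewrite /conv_sum (bigID (fun K => 0 < tomono K i)%N) /=.
rewrite [X in _ + X]big1 ?addr0 => [|K /andP[_]]; last by rewrite lt0n negbK => /eqP /F0.
apply: (@reindex_mono_sum _ _ (fun k => mono_le k (incm i m) && (0 < k i)%N)
  (mono_le^~ m) (decm i) (incm i) F (fun k => F (incm i k))).
- by move=> k /andP[/mono_le_mdeg].
- by move=> k /mono_le_mdeg.
- move=> k /andP[/mono_leP km ki]; split; last exact: decmK.
  apply/mono_leP => j; case: (eqVneq j i) => [->|ji]; last first.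
    by rewrite decm_ne //; move: (km j); rewrite incm_ne.
  by rewrite decm_id; move: (km i) ki; rewrite incm_id; case: (k i).
- move=> k /mono_leP km; rewrite incmK incm_id andbT; split => //.
  apply/mono_leP => j; case: (eqVneq j i) => [->|ji]; first by rewrite !incm_id ltnS.
  by rewrite !incm_ne.
- by move=> k /andP[_ ki]; rewrite decmK.
Qed.

Lemma mono_subK m k : mono_le k m -> mono_sub m (mono_sub m k) = k.
Proof. by move/mono_leP => km; apply: monoext => i; rewrite /mono_sub subKn. Qed.
Lemma mono_sub_le m k : mono_le (mono_sub m k) m.
Proof. by apply/mono_leP => i; rewrite /mono_sub leq_subr. Qed.
Lemma mono_sub_incm i m k : mono_sub (incm i m) (incm i k) = mono_sub m k.
Proof.
apply: monoext => j; rewrite /mono_sub.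
by case: (eqVneq j i) => [->|ji]; rewrite ?incm_id ?subSS ?incm_ne.
Qed.

Lemma conv_sum_rev m F : conv_sum m F = conv_sum m (fun k => F (mono_sub m k)).
Proof.
apply: (@reindex_mono_sum _ _ (mono_le^~ m) (mono_le^~ m) (mono_sub m) (mono_sub m))
  => k km; rewrite ?mono_subK ?mono_sub_le //; exact: mono_le_mdeg.
Qed.

Lemma psmulC f g : psmul f g = psmul g f.
Proof.
apply: psext => m; rewrite !psmulE conv_sum_rev; apply: eq_conv_sum => k km.
by rewrite mono_subK // mulrC.
Qed.

Lemma mulx_psmul i a b : mulx i (psmul a b) = psmul (mulx i a) b.
Proof.
apply: psext => m; rewrite mulxE !psmulE; case: (posnP (m i)) => [mi0|mi].
  symmetry; rewrite /conv_sum big1 // => K /mono_leP Km; rewrite mulxE.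
  by move: (Km i); rewrite mi0 leqn0 => /eqP ->; rewrite mul0r.
rewrite -[in RHS](decmK mi) conv_sum_incm => [|k ki]; last by rewrite mulxE ki mul0r.
by apply: eq_conv_sum => k _; rewrite mulxE incm_id incmK mono_sub_incm.
Qed.

Lemma conv_sum_dx i m a b :
  conv_sum (incm i m) (fun k => (k i)%:R * (a k * b (mono_sub (incm i m) k))) =
  psmul (dx i a) b m.
Proof.
rewrite conv_sum_incm => [|k ->]; last by rewrite mul0r.
by rewrite psmulE; apply: eq_conv_sum => k _; rewrite incm_id mono_sub_incm dxE mulrA.
Qed.

Lemma dx_psmul i a b : dx i (psmul a b) = psmul (dx i a) b + psmul a (dx i b).
Proof.
apply: psext => m; rewrite psaddE dxE psmulE.
set M := incm i m.
have -> : (m i).+1%:R * conv_sum M (fun k => a k * b (mono_sub M k)) =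
    conv_sum M (fun k => (k i)%:R * (a k * b (mono_sub M k))) +
    conv_sum M (fun k => (M i - k i)%:R * (a k * b (mono_sub M k))).
  rewrite /conv_sum mulr_sumr -big_split /=; apply: eq_bigr => K /mono_leP KM.
  by rewrite -mulrDl -natrD subnKC ?KM // /M incm_id.
rewrite conv_sum_dx; congr (_ + _); rewrite conv_sum_rev (psmulC a) -conv_sum_dx.
apply: eq_conv_sum => k km; rewrite mono_subK //.
by move/mono_leP: km => km; rewrite /mono_sub subKn // [b _ * _]mulrC.
Qed.

Lemma psmul0l g : psmul 0 g = 0.
Proof. by apply: psext => m; rewrite psmulE /conv_sum big1 // => K _; rewrite mul0r. Qed.
Lemma psmulDl f1 f2 g : psmul (f1 + f2) g = psmul f1 g + psmul f2 g.
Proof.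
apply: psext => m; rewrite psaddE !psmulE /conv_sum -big_split /=.
by apply: eq_bigr => K _; rewrite psaddE mulrDl.
Qed.
Lemma psmulZl c f g : psmul (c *: f) g = c *: psmul f g.
Proof.
apply: psext => m; rewrite psscaleE !psmulE /conv_sum mulr_sumr.
by apply: eq_bigr => K _; rewrite psscaleE mulrA.
Qed.
Lemma psmulBl f1 f2 g : psmul (f1 - f2) g = psmul f1 g - psmul f2 g.
Proof. by rewrite psmulDl -scaleN1r psmulZl scaleN1r. Qed.
Lemma psmul_suml (I : Type) (r : seq I) (P : pred I) (F : I -> ps) g :
  psmul (\sum_(t <- r | P t) F t) g = \sum_(t <- r | P t) psmul (F t) g.
Proof.
apply: (big_rec2 (fun x y => psmul x g = y)); first exact: psmul0l.
by move=> t x y _ <-; rewrite psmulDl.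
Qed.
Lemma psmul0r g : psmul g 0 = 0. Proof. by rewrite psmulC psmul0l. Qed.
Lemma psmulBr f g1 g2 : psmul f (g1 - g2) = psmul f g1 - psmul f g2.
Proof. by rewrite !(psmulC f) psmulBl. Qed.
Lemma mulx_psmulr i a b : mulx i (psmul a b) = psmul a (mulx i b).
Proof. by rewrite psmulC mulx_psmul psmulC. Qed.

Lemma psmul1l g : psmul (ps1 C p q) g = g.
Proof.
apply: psext => m; rewrite psmulE /conv_sum.
pose K0 := ofmono (mdeg m) (fun _ => 0%N).
have tK0 : tomono K0 = (fun _ => 0%N) by rewrite tomonoK.
rewrite (bigD1 K0) /=; last by rewrite tK0; apply/mono_leP.
rewrite big1 ?addr0 => [|K /andP[_ KK0]]; last first.
  rewrite /ps1; case: ifP => [/forallP K_0|]; last by rewrite mul0r.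
  case/eqP: KK0; rewrite -(ofmonoK K); congr ofmono.
  by apply: monoext => i; apply/eqP.
rewrite tK0 /ps1 (_ : [forall i, _] = true) ?mul1r; last by apply/forallP.
by congr g; apply: monoext => i; rewrite /mono_sub subn0.
Qed.

End CauchyProduct.

Section KTypes.
Variables (C : numClosedFieldType) (p q : nat).
Local Notation n := (p + q)%N.
Local Notation ps := (ps C p q).
Local Notation mono := (mono p q).
Local Notation mulx := (mulx C p q).
Local Notation dx := (dx C p q).
Local Notation psmul := (psmul C p q).
Local Notation ps1 := (ps1 C p q).
Local Notation rotation := (@rotation C p q).
Local Notation rotation_casimir := (@rotation_casimir C p q).
Local Notation sqnorm := (@sqnorm C p q).
Local Notation px := (@px p q).
Local Notation py := (@py p q).
Implicit Types (P : pred 'I_n) (g h : ps) (m : mono) (a b i j : 'I_n).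

Definition harm_eigen (d k : nat) : C := - 2%:R * (k%:R ^+ 2 + (d%:R - 2%:R) * k%:R).

Lemma rotation_psmul a b u v :
  rotation a b (psmul u v) = psmul (rotation a b u) v + psmul u (rotation a b v).
Proof.
rewrite /rotation !dx_psmul !mulxD (mulx_psmul a (dx b u)) (mulx_psmul b (dx a u)).
by rewrite (mulx_psmulr a u) (mulx_psmulr b u) psmulBl psmulBr; psring.
Qed.

Lemma dx_eq0 i h : (forall m, h m != 0 -> m i = 0%N) -> dx i h = 0.
Proof.
move=> hi; apply: psext => m; rewrite dxE ps0E.
by case: (eqVneq (h (incm i m)) 0) => [->|/hi]; rewrite ?mulr0 ?incm_id.
Qed.

Lemma dx_ps1 i : dx i ps1 = 0.
Proof.
apply: dx_eq0 => m; rewrite /ps1.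
by case: ifP => [/forallP m0 _|]; [apply/eqP | rewrite eqxx].
Qed.

Lemma rotation_eq0 a b h :
  (forall m, h m != 0 -> m a = 0%N /\ m b = 0%N) -> rotation a b h = 0.
Proof.
by move=> hab; rewrite /rotation !dx_eq0 ?mulx0 ?subrr // => m /hab [].
Qed.

Lemma rotation_mulx2 a b j h : dx a h = 0 -> dx b h = 0 ->
  rotation a b (mulx j (mulx j h)) =
  2%:R *: ((b == j)%:R *: mulx a (mulx j h) - (a == j)%:R *: mulx b (mulx j h)).
Proof.
move=> ha hb; rewrite /rotation !(dx_mulx, dxD, dxZ, mulxD, mulxZ) ha hb !mulx0.
by case: (b == j); case: (a == j); psring.
Qed.

Lemma rotation_sqnorm1 a b P : P a = P b -> rotation a b (sqnorm P ps1) = 0.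
Proof.
move=> Pab; rewrite /sqnorm rotation_sum.
under eq_bigr => j _ do rewrite rotation_mulx2 ?dx_ps1 //.
rewrite -scaler_sumr sumrB.
rewrite (sum_delta P b (fun j => mulx a (mulx j ps1))).
rewrite (sum_delta P a (fun j => mulx b (mulx j ps1))).
by rewrite Pab mulxC subrr scaler0.
Qed.

Lemma rotation_iter_sqnorm1 a b P k : P a = P b ->
  rotation a b (iter k (psmul (sqnorm P ps1)) ps1) = 0.
Proof.
move=> Pab; elim: k => [|k IH] /=; first by rewrite /rotation !dx_ps1 !mulx0 subrr.
by rewrite rotation_psmul rotation_sqnorm1 // IH psmul0l psmul0r addr0.
Qed.

Lemma psmul_sqnorm1 P g : psmul (sqnorm P ps1) g = sqnorm P g.
Proof.
by rewrite /sqnorm psmul_suml; apply: eq_bigr => i _; rewrite -!mulx_psmul psmul1l.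
Qed.

Lemma rx2E : rx2 C p q = sqnorm px ps1.
Proof. by apply: psext => m; rewrite /sqnorm pssumE. Qed.
Lemma ry2E : ry2 C p q = sqnorm py ps1.
Proof. by apply: psext => m; rewrite /sqnorm pssumE. Qed.

Lemma mdeg_incm i m : mdeg (incm i m) = (mdeg m).+1.
Proof.
rewrite /mdeg (bigD1 i) //= [in RHS](bigD1 i) //= incm_id addSn.
by congr (_ + _).+1; apply: eq_bigr => j ji; rewrite incm_ne.
Qed.

Lemma mdeg_incm_decm a b m : (0 < m a)%N -> mdeg (incm b (decm a m)) = mdeg m.
Proof. by move=> ma; rewrite mdeg_incm -{2}(decmK ma) mdeg_incm. Qed.

Lemma rotation_mdeg a b g h m : (forall m', mdeg m' = mdeg m -> g m' = h m') ->
  rotation a b g m = rotation a b h m.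
Proof.
move=> gh; have E i j : (0 < m i)%N -> g (incm j (decm i m)) = h (incm j (decm i m)).
  by move=> mi; apply: gh; rewrite mdeg_incm_decm.
by rewrite /rotation !pssubE !mulxE !dxE; do 2 case: ifP => [/E ->|_].
Qed.

(* The double sum defining rser is truncated at the total degree, which rotations preserve. *)
Lemma rotation_rser a b (phi : nat -> nat -> C) : px a = px b ->
  rotation a b (rser C p q phi) = 0.
Proof.
pose G al be := psmul (iter al (psmul (rx2 C p q)) ps1) (iter be (psmul (ry2 C p q)) ps1).
move=> Pab; apply: psext => m.
pose N := (mdeg m).+1.
rewrite (@rotation_mdeg _ _ _ (\sum_(al < N) \sum_(be < N) phi al be *: G al be)).
  rewrite rotation_sum big1 // => al _; rewrite rotation_sum big1 // => be _.
  have Qab : py a = py b by rewrite !pyE Pab.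
  rewrite rotationZ /G rx2E ry2E rotation_psmul !rotation_iter_sqnorm1 //.
  by rewrite psmul0l psmul0r addr0 scaler0.
move=> m' Em'; rewrite /rser -/(mdeg m') Em' pssumE; apply: eq_bigr => al _.
by rewrite pssumE; apply: eq_bigr => be _.
Qed.

Lemma rotation_casimir_is_linear P : linear (rotation_casimir P).
Proof.
move=> c f g; rewrite /rotation_casimir scaler_sumr -big_split; apply: eq_bigr => a _.
by rewrite scaler_sumr -big_split; apply: eq_bigr => b _; rewrite !linearP.
Qed.
HB.instance Definition _ P :=
  GRing.isLinear.Build C ps ps _ (rotation_casimir P) (rotation_casimir_is_linear P).

Lemma rotation_casimir_psmul P u v c :
  (forall a b, P a -> P b -> rotation a b v = 0) ->
  rotation_casimir P u = c *: u -> rotation_casimir P (psmul u v) = c *: psmul u v.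
Proof.
move=> v0 Pu.
have rot_uv w a b : P a -> P b -> rotation a b (psmul w v) = psmul (rotation a b w) v.
  by move=> Pa Pb; rewrite rotation_psmul v0 // psmul0r addr0.
rewrite -psmulZl -Pu /rotation_casimir psmul_suml; apply: eq_bigr => a Pa.
by rewrite psmul_suml; apply: eq_bigr => b Pb; rewrite !rot_uv.
Qed.

Lemma rotation_casimir_harmonic P d k h : #|P| = d -> lap P h = 0 ->
  (forall m, h m != 0 -> degm P m = k) -> rotation_casimir P h = harm_eigen d k *: h.
Proof.
move=> <- Lh hk; apply: psext => m.
rewrite rotation_casimirE Lh [sqnorm P 0]linear0 !psscaleE.
rewrite !pssubE !psscaleE !eulerE ps0E /harm_eigen.
by case: (eqVneq (h m) 0) => [->|/hk ->]; ring.
Qed.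

Lemma mdeg_split m : mdeg m = (degm px m + degm py m)%N.
Proof.
by rewrite /mdeg /degm (bigID px) /=; congr (_ + _)%N; apply: eq_bigl => i; rewrite pyE.
Qed.

Lemma harm_x_rotation_casimir k h : harm_x C p q k h ->
  rotation_casimir px h = harm_eigen p k *: h.
Proof.
case=> hk Lh; apply: rotation_casimir_harmonic; first exact: card_px.
  by apply: psext => m; rewrite /lap pssumE; move/(congr1 (fun f => f m)): Lh.
by move=> m /hk [my <-]; rewrite -/(mdeg m) mdeg_split [degm py m]big1 ?addn0.
Qed.

Lemma harm_y_rotation_casimir l h : harm_y C p q l h ->
  rotation_casimir py h = harm_eigen q l *: h.
Proof.
case=> hl Lh; apply: rotation_casimir_harmonic; first exact: card_py.
  by apply: psext => m; rewrite /lap pssumE; move/(congr1 (fun f => f m)): Lh.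
by move=> m /hl [mx <-]; rewrite -/(mdeg m) mdeg_split [degm px m]big1.
Qed.

Lemma Kelt_rotation_casimir k l F : Kelt C p q k l F ->
  rotation_casimir px F = harm_eigen p k *: F /\
  rotation_casimir py F = harm_eigen q l *: F.
Proof.
case=> h1 [h2 [phi [hx [hy ->]]]]; have [h1x _] := hx; have [h2y _] := hy.
split.
  apply: rotation_casimir_psmul (harm_x_rotation_casimir hx) => a b Pa Pb.
  rewrite rotation_psmul rotation_rser; last by rewrite Pa Pb.
  by rewrite rotation_eq0 ?psmul0l ?psmul0r ?addr0 // => m /h2y[m0 _]; split; apply: m0.
rewrite psmulC; apply: rotation_casimir_psmul => [a b Pa Pb|].
  by apply: rotation_eq0 => m /h1x[m0 _]; split; apply: m0.
apply: rotation_casimir_psmul (harm_y_rotation_casimir hy) => a b Pa Pb.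
by apply: rotation_rser; move: Pa Pb; rewrite !pyE => /negPf -> /negPf ->.
Qed.

Lemma Khom_rotation_casimir kp km f : Khom C p q kp km f ->
  exists k l : nat, [/\ kp = k%:R + p%:R / 2%:R, km = l%:R + q%:R / 2%:R,
    rotation_casimir px f = harm_eigen p k *: f &
    rotation_casimir py f = harm_eigen q l *: f].
Proof.
case=> N [c [F [k [l [-> [-> [FK ->]]]]]]]; exists k, l.
have -> : (fun m => \sum_(t < N) c t * F t m) = \sum_(t < N) c t *: F t.
  by apply: psext => m; rewrite pssumE.
have [FKx FKy] := all_and2 (fun t => Kelt_rotation_casimir (FK t)).
split => //; rewrite linear_sum scaler_sumr; apply: eq_bigr => t _.
  by rewrite linearZ /= FKx !scalerA mulrC.
by rewrite linearZ /= FKy !scalerA mulrC.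
Qed.

End KTypes.

Section Sl2Triple.
Variables (C : numClosedFieldType) (p q : nat).
Local Notation n := (p + q)%N.
Local Notation ps := (ps C p q).
Local Notation mono := (mono p q).
Local Notation Hop := (Hop C p q).
Local Notation Xplus := (Xplus C p q).
Local Notation Xminus := (Xminus C p q).
Local Notation px := (@px p q).
Local Notation py := (@py p q).
Local Notation sqnorm := (@sqnorm C p q).
Local Notation lap := (@lap C p q).
Local Notation euler := (@euler C p q).
Local Notation rotation_casimir := (@rotation_casimir C p q).
Implicit Types (g : ps) (m : mono).

Lemma XplusE g : Xplus g = - (1 / 2%:R) *: (lap px g + sqnorm py g).
Proof.
by apply: psext => m; rewrite /Xplus /Lapx ry2E psmul_sqnorm1 psscaleE psaddE /lap pssumE.
Qed.

Lemma XminusE g : Xminus g = 1 / 2%:R *: (sqnorm px g + lap py g).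
Proof.
by apply: psext => m; rewrite /Xminus /Lapy rx2E psmul_sqnorm1 psscaleE psaddE /lap pssumE.
Qed.

Definition weight m : C := (degm py m)%:R - (degm px m)%:R + (q%:R - p%:R) / 2%:R.

Lemma HopE g m : Hop g m = weight m * g m.
Proof.
have Exg : Ex C p q g m = euler px g m by rewrite -sum_mulx_dx pssumE.
have Eyg : Ey C p q g m = euler py g m by rewrite -sum_mulx_dx pssumE.
by rewrite /Hop Exg Eyg /weight !eulerE; field.
Qed.

Lemma weight_eigen g c m : Hop g = c *: g -> g m != 0 -> weight m = c.
Proof. by move=> Hg gm; apply: (mulIf gm); rewrite -HopE Hg. Qed.

Lemma casimir_XminusXplus g m : casimir g m =
  - 8%:R * Xminus (Xplus g) m
  + (n%:R * (n%:R - 4%:R) / 2%:R - 2%:R * weight m * (weight m + 2%:R)) * g m.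
Proof.
rewrite XminusE XplusE !(linearD, linearZ) /= (lapC py px) (lap_sqnorm py).
rewrite /casimir !rotation_casimirE (boost_casimirE g (@px_py_disjoint p q)).
rewrite card_px card_py !(psaddE, psoppE, psscaleE, pssubE, eulerE, natrM) /weight natrD.
by field.
Qed.

Lemma casimir_XplusXminus g m : casimir g m =
  - 8%:R * Xplus (Xminus g) m
  + (n%:R * (n%:R - 4%:R) / 2%:R - 2%:R * weight m * (weight m - 2%:R)) * g m.
Proof.
rewrite XminusE XplusE !(linearD, linearZ) /= (sqnormC py px) (lap_sqnorm px).
rewrite /casimir !rotation_casimirE (boost_casimirE g (@px_py_disjoint p q)).
rewrite card_px card_py !(psaddE, psoppE, psscaleE, pssubE, eulerE, natrM) /weight natrD.
by field.
Qed.

Definition casimir_eigen (mm : nat) : C :=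
  n%:R * (n%:R - 4%:R) / 2%:R - 2%:R * mm%:R * (mm%:R + 2%:R).

Lemma Xplus0 : Xplus 0 = 0.
Proof. by rewrite XplusE (linear0 (lap px)) (linear0 (sqnorm py)) addr0 scaler0. Qed.
Lemma Xminus0 : Xminus 0 = 0.
Proof. by rewrite XminusE (linear0 (sqnorm px)) (linear0 (lap py)) addr0 scaler0. Qed.

Lemma casimir_Mplus g mm : Hop g = mm%:R *: g -> Xplus g = 0 ->
  casimir g = casimir_eigen mm *: g.
Proof.
move=> Hg Xg; apply: psext => m; rewrite casimir_XminusXplus Xg Xminus0 psscaleE ps0E.
by case: (eqVneq (g m) 0) => [->|/(weight_eigen Hg) ->]; rewrite /casimir_eigen; ring.
Qed.

Lemma casimir_Mminus g mm : Hop g = (- mm%:R) *: g -> Xminus g = 0 ->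
  casimir g = casimir_eigen mm *: g.
Proof.
move=> Hg Xg; apply: psext => m; rewrite casimir_XplusXminus Xg Xplus0 psscaleE ps0E.
by case: (eqVneq (g m) 0) => [->|/(weight_eigen Hg) ->]; rewrite /casimir_eigen; ring.
Qed.

Lemma rotation_casimir_diff_lowest g : Hop g = 0 -> Xplus g = 0 -> Xminus g = 0 ->
  rotation_casimir px g - rotation_casimir py g =
  ((p%:R - q%:R) * (n%:R - 4%:R) / 2%:R) *: g.
Proof.
move=> Hg Xpg Xmg; have half : 1 / 2%:R != 0 :> C by rewrite mul1r invr_eq0 pnatr_eq0.
have Lx : lap px g = - sqnorm py g.
  apply/eqP; rewrite -addr_eq0; move/eqP: Xpg.
  by rewrite XplusE scaler_eq0 oppr_eq0 (negPf half).
have Ly : lap py g = - sqnorm px g.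
  apply/eqP; rewrite -addr_eq0 addrC; move/eqP: Xmg.
  by rewrite XminusE scaler_eq0 (negPf half).
apply: psext => m; rewrite pssubE psscaleE !rotation_casimirE Lx Ly.
rewrite (linearN (sqnorm px)) (linearN (sqnorm py)) /= (sqnormC py px) card_px card_py.
rewrite !(psscaleE, pssubE, psoppE, eulerE).
case: (eqVneq (g m) 0) => [->|gm]; first by ring.
have := weight_eigen (etrans Hg (esym (scale0r g))) gm; rewrite /weight => h0.
have -> : (degm py m)%:R = (degm px m)%:R + (p%:R - q%:R) / 2%:R :> C.
  by rewrite -[LHS]subr0 -h0; field.
by rewrite natrD; field.
Qed.

End Sl2Triple.

Theorem corollary3p5 (C : numClosedFieldType) (p q m : nat) (kp km : C)
  (f : ps C p q) :
  (2 <= p)%N -> (2 <= q)%N -> ~~ odd (p + q) -> (m + 3 <= (p + q) %/ 2)%N ->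
  (Mplus C p q m f \/ Mminus C p q m f) -> Khom C p q kp km f ->
  Xihat C p q f =
    psscale C p q ((kp - km) * (kp + km - 2)
                   - (p%:R - q%:R) / (p + q)%:R * (m%:R * (m%:R + 2))) f
  /\ (m = 0%N -> Xihat C p q f = ps0 C p q).
Proof.
move=> p2 _ _ _ fM /Khom_rotation_casimir [k [l [-> -> Rx Ry]]].
have n_gt0 : (0 < p + q)%N by rewrite addn_gt0 (leq_trans _ p2).
have Cf : casimir f = casimir_eigen C p q m *: f.
  by case: fM => -[_ [Hf [Xf _]]]; [apply: casimir_Mplus | apply: casimir_Mminus].
split=> [|m0].
  rewrite XihatE // Cf Rx Ry -scalerBl scalerA -scalerBl scalerA.
  apply: (congr1 (fun c => c *: f)).
  by rewrite /casimir_eigen /harm_eigen natrD; field; rewrite -natrD pnatr_eq0 -lt0n.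
have [Hf Xpf Xmf] : [/\ Hop C p q f = 0, Xplus C p q f = 0 & Xminus C p q f = 0].
  by subst m; case: fM => -[_ [-> [Xf Xf']]]; rewrite ?oppr0; split => //; exact: scale0r.
rewrite XihatE // Cf rotation_casimir_diff_lowest // scalerA -scalerBl scalerA m0.
rewrite (_ : _ * _ = 0) ?scale0r // /casimir_eigen natrD; field.
by rewrite -natrD pnatr_eq0 -lt0n.
Qed.
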